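(* Consider a POMDP with finite state space $\mathcal S$, finite action space $\mathcal A$, finite observation space $\mathcal Y$, initial state $s_1\sim\rho$, joint transition kernel $P(s',y'\mid s,a)$, reward $R_t=r(s_t,a_t)\in[0,R_{\max}]$ and discount factor $\gamma\in[0,1)$. Let $\mathcal Z$ be a finite agent-state space with update $z_{t+1}=\phi(z_t,y_{t+1},a_t)$ and let $\sigma_t:h_t\mapsto z_t$ be the map from histories $h_t=(y_{1:t},a_{1:t-1})$ to agent states obtained by unrolling $\phi$ (with $\sigma_1(h_1)=\phi(z_0,y_1,a_0)$ for a given initial agent state $z_0$ and dummy action $a_0$, and $\sigma_{t+1}(h_{t+1})=\phi(\sigma_t(h_t),y_{t+1},a_t)$). Fix $L\ge1$, write $[t]:=t\bmod L$, $\mathcal L:=\{0,\dots,L-1\}$. Let $\mu=(\mu^0,\dots,\mu^{L-1})$ be a periodic agent-state based behavior policy ($a_t\sim\mu^{[t]}(\cdot\mid z_t)$) such that the induced Markov chain $\{(S_t,Y_t,Z_t,A_t)\}_{t\ge1}$ converges to a cyclic limiting distribution $(\zeta^0_\mu,\dots,\zeta^{L-1}_\mu)$ (for each $\ell$, the law of $(S_t,Y_t,Z_t,A_t)$ converges to $\zeta^\ell_\mu$ along $t\equiv\ell\pmod L$) with $\sum_{(s,y)}\zeta^\ell_\mu(s,y,z,a)>0$ for all $(\ell,z,a)$. Define $r^\ell_\mu(z,a):=\sum_s r(s,a)\zeta^\ell_\mu(s\mid z)$ and $P^\ell_\mu(z'\mid z,a):=\sum_{(s,y')}\mathbf 1_{\{z'=\phi(z,y',a)\}}P(y'\mid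 s,a)\zeta^\ell_\mu(s\mid z)$, let $(Q^0_\mu,\dots,Q^{L-1}_\mu)$ be the unique solution of $Q^\ell_\mu(z,a)=r^\ell_\mu(z,a)+\gamma\sum_{z'}P^\ell_\mu(z'\mid z,a)\max_{a'}Q^{[\ell+1]}_\mu(z',a')$ for all $\ell,z,a$, let $V^\ell_\mu(z):=\max_{a}Q^\ell_\mu(z,a)$, let $\pi^\ell_\mu(z)\in\arg\max_aQ^\ell_\mu(z,a)$, and let $\vec\pi_\mu$ be the history-dependent policy $\vec\pi_{\mu,t}(h_t):=\pi^{[t]}_\mu(\sigma_t(h_t))$. Let $\mathfrak F$ be a convex and balanced set of real-valued functions on $\mathcal Z$, with integral probability metric $d_{\mathfrak F}$ and Minkowski functional $\rho_{\mathfrak F}$. For $\ell\in\mathcal L$ and $t\ge1$, let $\mathcal T(t,\ell):=\{\tau\ge t:[\tau]=\ell\}$ and $$\varepsilon^\ell_t:=\sup_{\tau\in\mathcal T(t,\ell)}\sup_{h_\tau,a_\tau}\Big|\mathbb E[R_\tau\mid h_\tau,a_\tau]-\sum_{s\in\mathcal S}r(s,a_\tau)\zeta^\ell_\mu(s\mid\sigma_\tau(h_\tau),a_\tau)\Big|,$$ $$\delta^\ell_t:=\sup_{\tau\in\mathcal T(t,\ell)}\sup_{h_\tau,a_\tau}d_{\mathfrak F}\Big(\Pr(Z_{\tau+1}=\cdot\mid h_\tau,a_\tau),\,P^\ell_\mu(\cdot\mid\sigma_\tau(h_\tau),a_\tau)\Big).$$ Then for every $t\ge1$, $$\sup_{h_t}\big[V^\star_t(h_t)-V^{\vec\pi_\mu}_t(h_t)\big]\le\frac{2}{1-\gamma^L}\sum_{\ell\in\mathcal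 L}\gamma^\ell\Big[\varepsilon^{[t+\ell]}_{t+\ell}+\gamma\,\delta^{[t+\ell]}_{t+\ell}\,\rho_{\mathfrak F}\big(V^{[t+\ell+1]}_\mu\big)\Big].$$
   Context: $P(y'\mid s,a):=\sum_{s'}P(s',y'\mid s,a)$. Marginals/conditionals of $\zeta^\ell_\mu$ use the same symbol, e.g. $\zeta^\ell_\mu(s\mid z)=\zeta^\ell_\mu(s,z)/\zeta^\ell_\mu(z)$ and $\zeta^\ell_\mu(s\mid z,a)=\zeta^\ell_\mu(s,z,a)/\zeta^\ell_\mu(z,a)$. For a history-dependent (possibly randomized) policy $\vec\pi$, $V^{\vec\pi}_t(h_t):=\mathbb E^{\vec\pi}\big[\sum_{\tau=t}^\infty\gamma^\tau R_\tau\mid h_t\big]$, and $V^\star_t(h_t):=\sup_{\vec\pi}V^{\vec\pi}_t(h_t)$, the supremum being over all history-dependent policies. $\mathfrak F$ balanced means $af\in\mathfrak F$ whenever $f\in\mathfrak F$ and $|a|\le1$. For probability measures $\xi_1,\xi_2$ on $\mathcal Z$, $d_{\mathfrak F}(\xi_1,\xi_2):=\sup_{f\in\mathfrak F}|\int f\,d\xi_1-\int f\,d\xi_2|$; for $f:\mathcal Z\to\mathbb R$, $\rho_{\mathfrak F}(f):=\inf\{\rho>0: f/\rho\in\mathfrak F\}$ (equal to $\infty$ if no such $\rho$ exists). *)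

From HB Require Import structures.
From mathcomp Require Import all_boot all_order all_algebra.
From mathcomp Require Import all_classical all_reals all_analysis.

Set Implicit Arguments.
Unset Strict Implicit.
Unset Printing Implicit Defensive.

Import Order.TTheory GRing.Theory Num.Theory.
Local Open Scope ring_scope.

(* Histories h_t = (y_1 ; [(a_1,y_2); ...; (a_{t-1},y_t)]); t = size + 1 *)

Definition hist (A Y : Type) := (Y * seq (A * Y))%type.

Definition htime (A Y : Type) (h : hist A Y) : nat := (size h.2).+1.

Definition agent_state (A Y Z : Type) (phi : Z -> Y -> A -> Z) (z0 : Z) (a0 : A)
  (h : hist A Y) : Z :=
  foldl (fun z ay => phi z ay.2 ay.1) (phi z0 h.1 a0) h.2.

(* Unnormalized filter: alpha(h_t)(s) = Pr(S_t = s, y_{1:t} | a_{1:t-1}).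
   rho s y is the joint law of (S_1, Y_1); P s' y' s a = P(s',y' | s,a). *)
Definition alpha (R : realType) (S A Y : finType)
  (rho : S -> Y -> R) (P : S -> Y -> S -> A -> R) (h : hist A Y) : S -> R :=
  foldl (fun al ay => fun s' => \sum_(s : S) al s * P s' ay.2 s ay.1)
        (fun s => rho s h.1) h.2.

Definition reachable (R : realType) (S A Y : finType)
  (rho : S -> Y -> R) (P : S -> Y -> S -> A -> R) (h : hist A Y) : Prop :=
  0 < \sum_(s : S) alpha rho P h s.

Definition belief (R : realType) (S A Y : finType)
  (rho : S -> Y -> R) (P : S -> Y -> S -> A -> R) (h : hist A Y) (s : S) : R :=
  alpha rho P h s / \sum_(s0 : S) alpha rho P h s0.

Definition pred_obs (R : realType) (S A Y : finType)
  (rho : S -> Y -> R) (P : S -> Y -> S -> A -> R) (h : hist A Y) (a : A) (y' : Y) : R :=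
  \sum_(s : S) belief rho P h s * \sum_(s' : S) P s' y' s a.

Definition exp_reward (R : realType) (S A Y : finType)
  (rho : S -> Y -> R) (P : S -> Y -> S -> A -> R) (r : S -> A -> R)
  (h : hist A Y) (a : A) : R :=
  \sum_(s : S) belief rho P h s * r s a.

Definition next_agent_state_law (R : realType) (S A Y Z : finType)
  (rho : S -> Y -> R) (P : S -> Y -> S -> A -> R)
  (phi : Z -> Y -> A -> Z) (z0 : Z) (a0 : A) (h : hist A Y) (a : A) (z' : Z) : R :=
  \sum_(y' : Y) pred_obs rho P h a y' *
     (z' == phi (agent_state phi z0 a0 h) y' a)%:R.

Definition hpolicy (R : realType) (A Y : Type) := hist A Y -> A -> R.

Definition is_dist (R : realType) (T : finType) (p : T -> R) : Prop :=
  (forall x, 0 <= p x) /\ \sum_(x : T) p x = 1.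

Definition valid_hpolicy (R : realType) (A Y : finType) (pi : hpolicy R A Y) : Prop :=
  forall h, is_dist (pi h).

(* exp_step k h = E^pi[ R_{t+k} | h_t = h ] *)
Fixpoint exp_step (R : realType) (S A Y : finType)
  (rho : S -> Y -> R) (P : S -> Y -> S -> A -> R) (r : S -> A -> R)
  (pi : hpolicy R A Y) (k : nat) (h : hist A Y) {struct k} : R :=
  match k with
  | 0 => \sum_(a : A) pi h a * exp_reward rho P r h a
  | k'.+1 => \sum_(a : A) pi h a *
        \sum_(y' : Y) pred_obs rho P h a y' *
           exp_step rho P r pi k' (h.1, rcons h.2 (a, y'))
  end.

Definition Vpi (R : realType) (S A Y : finType)
  (rho : S -> Y -> R) (P : S -> Y -> S -> A -> R) (r : S -> A -> R) (gamma : R)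
  (pi : hpolicy R A Y) (h : hist A Y) : \bar R :=
  (\sum_(k <oo) ((gamma ^+ (htime h + k) * exp_step rho P r pi k h)%:E))%E.

Definition Vstar (R : realType) (S A Y : finType)
  (rho : S -> Y -> R) (P : S -> Y -> S -> A -> R) (r : S -> A -> R) (gamma : R)
  (h : hist A Y) : \bar R :=
  ereal_sup [set Vpi rho P r gamma pi h | pi in [set pi | valid_hpolicy pi]].

(* chain_law k s y z a = Pr(S_t=s, Y_t=y, Z_t=z, A_t=a) with t = k+1,
   under a_t ~ mu^{[t]}(.|z_t). *)
Fixpoint chain_law (R : realType) (S A Y Z : finType)
  (rho : S -> Y -> R) (P : S -> Y -> S -> A -> R)
  (phi : Z -> Y -> A -> Z) (z0 : Z) (a0 : A) (L : nat)
  (mu : nat -> Z -> A -> R) (k : nat) {struct k} : S -> Y -> Z -> A -> R :=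
  match k with
  | 0 => fun s y z a => rho s y * (z == phi z0 y a0)%:R * mu (1 %% L)%N z a
  | k'.+1 => fun s' y' z' a' =>
      \sum_(s : S) \sum_(y : Y) \sum_(z : Z) \sum_(a : A)
        chain_law rho P phi z0 a0 L mu k' s y z a * P s' y' s a *
        (z' == phi z y' a)%:R * mu (k'.+2 %% L)%N z' a'
  end.

Definition zeta_sz (R : realType) (S A Y Z : finType)
  (zeta : S -> Y -> Z -> A -> R) (s : S) (z : Z) : R :=
  \sum_(y : Y) \sum_(a : A) zeta s y z a.
Definition zeta_cond_z (R : realType) (S A Y Z : finType)
  (zeta : S -> Y -> Z -> A -> R) (s : S) (z : Z) : R :=
  zeta_sz zeta s z / \sum_(s0 : S) zeta_sz zeta s0 z.
Definition zeta_sza (R : realType) (S A Y Z : finType)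
  (zeta : S -> Y -> Z -> A -> R) (s : S) (z : Z) (a : A) : R :=
  \sum_(y : Y) zeta s y z a.
Definition zeta_cond_za (R : realType) (S A Y Z : finType)
  (zeta : S -> Y -> Z -> A -> R) (s : S) (z : Z) (a : A) : R :=
  zeta_sza zeta s z a / \sum_(s0 : S) zeta_sza zeta s0 z a.

Definition r_mu (R : realType) (S A Y Z : finType) (r : S -> A -> R)
  (zeta : S -> Y -> Z -> A -> R) (z : Z) (a : A) : R :=
  \sum_(s : S) r s a * zeta_cond_z zeta s z.

Definition P_mu (R : realType) (S A Y Z : finType) (P : S -> Y -> S -> A -> R)
  (phi : Z -> Y -> A -> Z) (zeta : S -> Y -> Z -> A -> R) (z' z : Z) (a : A) : R :=
  \sum_(s : S) \sum_(y' : Y)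
     (z' == phi z y' a)%:R * (\sum_(s' : S) P s' y' s a) * zeta_cond_z zeta s z.

Definition max_act (R : realType) (A : Type) (f : A -> R) : R := sup (range f).

Definition convex_fset (R : realType) (Z : Type) (F : set (Z -> R)) : Prop :=
  forall f g (l : R), F f -> F g -> 0 <= l <= 1 ->
    F (fun z => l * f z + (1 - l) * g z).

Definition balanced_fset (R : realType) (Z : Type) (F : set (Z -> R)) : Prop :=
  forall f (c : R), F f -> `|c| <= 1 -> F (fun z => c * f z).

Definition ipm_F (R : realType) (Z : finType) (F : set (Z -> R)) (xi1 xi2 : Z -> R) : \bar R :=
  ereal_sup [set (`| \sum_(z : Z) f z * xi1 z - \sum_(z : Z) f z * xi2 z |)%:E
             | f in F].

(* rho_F(f) = inf { rho > 0 : f / rho in F }  (+oo if empty) *)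
Definition minkowski_F (R : realType) (Z : Type) (F : set (Z -> R)) (f : Z -> R) : \bar R :=
  ereal_inf [set (c%:E) | c in [set c : R | 0 < c /\ F (fun z => f z / c)]].

Definition mul_inf (R : realType) (x y : \bar R) : \bar R :=
  if (x == +oo)%E || (y == +oo)%E then +oo%E else (x * y)%E.

Definition pi_vec (R : realType) (A Y Z : finType) (phi : Z -> Y -> A -> Z)
  (z0 : Z) (a0 : A) (L : nat) (pimu : nat -> Z -> A) : hpolicy R A Y :=
  fun h a => (a == pimu (htime h %% L)%N (agent_state phi z0 a0 h))%:R.

Definition eps_err (R : realType) (S A Y Z : finType)
  (rho : S -> Y -> R) (P : S -> Y -> S -> A -> R) (r : S -> A -> R)
  (phi : Z -> Y -> A -> Z) (z0 : Z) (a0 : A) (L : nat)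
  (zeta : nat -> S -> Y -> Z -> A -> R) (l t : nat) : \bar R :=
  ereal_sup [set x | exists (h : hist A Y) (a : A),
     [/\ (t <= htime h)%N, (htime h %% L)%N = l, reachable rho P h &
         x = (`| exp_reward rho P r h a -
                 \sum_(s : S) r s a *
                    zeta_cond_za (zeta l) s (agent_state phi z0 a0 h) a |)%:E]].

Definition delta_err (R : realType) (S A Y Z : finType)
  (rho : S -> Y -> R) (P : S -> Y -> S -> A -> R)
  (phi : Z -> Y -> A -> Z) (z0 : Z) (a0 : A) (L : nat)
  (zeta : nat -> S -> Y -> Z -> A -> R) (F : set (Z -> R)) (l t : nat) : \bar R :=
  ereal_sup [set x | exists (h : hist A Y) (a : A),
     [/\ (t <= htime h)%N, (htime h %% L)%N = l, reachable rho P h &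
         x = ipm_F F (next_agent_state_law rho P phi z0 a0 h a)
                   (fun z' => P_mu P phi (zeta l) z' (agent_state phi z0 a0 h) a)]].

(* Read V_mu^[tau] at the agent state of a history of length tau; call this
   W(h).  The cyclic limit of the behaviour chain still draws its actions from
   mu, so zeta(s | z, a) = zeta(s | z), and the Bellman equation of Q_mu says
   that one step of the true POMDP dynamics applied to W differs from
   Q_mu^[tau] by at most eps + gamma delta rho_F(V_mu^[tau+1]): the reward error
   plus the integral-probability-metric error, via
   |xi1 f - xi2 f| <= d_F(xi1, xi2) rho_F(f).  So W is an approximate solution
   of the Bellman equation on histories.  Summing the discounted residuals
   along any policy bounds its value above by gamma^t (W(h) + G), and along
   the greedy policy pi_mu bounds it below by gamma^t (W(h) - G), where G is
   the discounted sum of residual bounds.  These bounds depend only on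
   tau mod L, so G <= (1 - gamma^L)^-1 times their discounted sum over one
   period. *)

From HB Require Import structures.
From mathcomp Require Import all_boot all_order all_algebra.
From mathcomp Require Import all_classical all_reals all_analysis.
From mathcomp Require Import ring lra.
Import Order.TTheory GRing.Theory Num.Theory numFieldNormedType.Exports.
Local Open Scope classical_set_scope.
Local Open Scope ring_scope.
Set Implicit Arguments.
Unset Strict Implicit.
Unset Printing Implicit Defensive.

Local Notation hist_rcons h a y := (h.1, rcons h.2 (a, y)).

Lemma htime_rcons (A Y : Type) (h : hist A Y) a y :
  htime (hist_rcons h a y) = (htime h).+1.
Proof. by rewrite /htime size_rcons. Qed.

Lemma agent_state_rcons (A Y Z : Type) (phi : Z -> Y -> A -> Z) z0 a0
    (h : hist A Y) a y :
  agent_state phi z0 a0 (hist_rcons h a y) = phi (agent_state phi z0 a0 h) y a.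
Proof. by rewrite /agent_state foldl_rcons. Qed.

Section SumLemmas.
Variable R : realType.

Lemma sum_indicator (I : finType) (i0 : I) (f : I -> R) :
  \sum_i (i == i0)%:R * f i = f i0.
Proof.
rewrite (bigD1 i0) //= eqxx mul1r big1 ?addr0 // => i /negbTE ->.
by rewrite mul0r.
Qed.

Lemma sum_dist_addr (I : finType) (p f : I -> R) (c : R) :
  \sum_i p i = 1 -> \sum_i p i * (f i + c) = \sum_i p i * f i + c.
Proof.
move=> p1; under eq_bigr do rewrite mulrDr.
by rewrite big_split /= -mulr_suml p1 mul1r.
Qed.

Lemma finite_bound (T : finType) (f : T -> R) : exists C, forall x, `|f x| <= C.
Proof.
exists (\sum_x `|f x|) => x.
by rewrite (bigD1 x) //= lerDl sumr_ge0.
Qed.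

Lemma le_max_act (A : finType) (f : A -> R) (a : A) : f a <= max_act f.
Proof.
have [C fC] := finite_bound f.
apply: ub_le_sup; last by exists a.
by exists C => _ [a' _ <-]; apply: le_trans (ler_norm _) (fC a').
Qed.

End SumLemmas.

Section Filter.
Variables (R : realType) (S A Y : finType).
Variables (rho : S -> Y -> R) (P : S -> Y -> S -> A -> R).
Hypothesis rho_ge0 : forall s y, 0 <= rho s y.
Hypothesis P_ge0 : forall s' y s a, 0 <= P s' y s a.
Hypothesis P_sum1 : forall s a, \sum_y \sum_s' P s' y s a = 1.

Lemma alpha_rcons h a y s' :
  alpha rho P (hist_rcons h a y) s' = \sum_s alpha rho P h s * P s' y s a.
Proof. by rewrite /alpha foldl_rcons. Qed.

Lemma alpha_ge0 h s : 0 <= alpha rho P h s.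
Proof.
case: h => y l; elim/last_ind: l s => [|l [a y'] IHl] s; first exact: rho_ge0.
rewrite (alpha_rcons (y, l)); apply: sumr_ge0 => s0 _; exact: mulr_ge0.
Qed.

Lemma belief_ge0 h s : 0 <= belief rho P h s.
Proof. by apply: divr_ge0; [|apply: sumr_ge0 => *]; exact: alpha_ge0. Qed.

Lemma belief_sum1 h : reachable rho P h -> \sum_s belief rho P h s = 1.
Proof. by move=> hR; rewrite -mulr_suml divff // gt_eqF. Qed.

Lemma pred_obs_ge0 h a y : 0 <= pred_obs rho P h a y.
Proof.
by apply: sumr_ge0 => s _; rewrite mulr_ge0 ?belief_ge0 ?sumr_ge0.
Qed.

Lemma pred_obs_sum1 h a :
  reachable rho P h -> \sum_y pred_obs rho P h a y = 1.
Proof.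
move=> hR; rewrite exchange_big -(belief_sum1 hR) /=.
by apply: eq_bigr => s _; rewrite -mulr_sumr P_sum1 mulr1.
Qed.

Lemma sum_alpha_rcons h a y : reachable rho P h ->
  \sum_s' alpha rho P (hist_rcons h a y) s' =
  pred_obs rho P h a y * \sum_s alpha rho P h s.
Proof.
move=> hR; under eq_bigr do rewrite alpha_rcons.
rewrite exchange_big /= /pred_obs /belief mulr_suml.
apply: eq_bigr => s _; rewrite mulrAC divfK ?gt_eqF //.
by rewrite mulr_sumr.
Qed.

Lemma reachable_rcons h a y : reachable rho P h ->
  0 < pred_obs rho P h a y -> reachable rho P (hist_rcons h a y).
Proof. by move=> hR py; rewrite /reachable sum_alpha_rcons // mulr_gt0. Qed.

Lemma reachable_extend (a : A) m h : reachable rho P h ->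
  exists h', reachable rho P h' /\ htime h' = (htime h + m)%N.
Proof.
elim: m h => [|m IHm] h hR; first by exists h; rewrite addn0.
have [y py] : exists y, 0 < pred_obs rho P h a y.
  apply/not_existsP => py_le0.
  have : \sum_y pred_obs rho P h a y <= 0.
    by apply: sumr_le0 => y _; rewrite leNgt; apply/negP; exact: py_le0.
  by rewrite pred_obs_sum1 // ler10.
have [h' [h'R h't]] := IHm _ (reachable_rcons hR py).
by exists h'; rewrite h't htime_rcons addSnnS.
Qed.

Lemma sum_pred_obs_le h a (f g : Y -> R) : reachable rho P h ->
  (forall y, reachable rho P (hist_rcons h a y) -> f y <= g y) ->
  \sum_y pred_obs rho P h a y * f y <= \sum_y pred_obs rho P h a y * g y.
Proof.
move=> hR fg; apply: ler_sum => y _.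
have [py0|py] := eqVneq (pred_obs rho P h a y) 0; first by rewrite py0 !mul0r.
rewrite ler_wpM2l ?pred_obs_ge0 //; apply/fg/reachable_rcons => //.
by rewrite lt_neqAle eq_sym py pred_obs_ge0.
Qed.

End Filter.

Lemma le_of_le_add_geometric (R : realType) (x b c g : R) :
  0 <= g < 1 -> (forall m, x <= b + g ^+ m * c) -> x <= b.
Proof.
move=> /andP[g0 g1] xle.
have cv : b + g ^+ m * c @[m --> \oo] --> b.
  rewrite -[X in _ --> X]addr0; apply: cvgD; first exact: cvg_cst.
  by rewrite -(mul0r c); apply: cvgMl; apply: cvg_expr; rewrite ger0_norm.
rewrite -(cvg_lim _ cv) //; apply: limr_ge; first exact: cvgP cv.
exact: nearW.
Qed.

Section PartialReturn.
Variables (R : realType) (S A Y : finType).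
Variables (rho : S -> Y -> R) (P : S -> Y -> S -> A -> R) (gamma : R).
Hypothesis rho_ge0 : forall s y, 0 <= rho s y.
Hypothesis P_ge0 : forall s' y s a, 0 <= P s' y s a.
Hypothesis P_sum1 : forall s a, \sum_y \sum_s' P s' y s a = 1.
Hypothesis gamma01 : 0 <= gamma < 1.

Let gamma_ge0 : 0 <= gamma. Proof. by case/andP: gamma01. Qed.

Definition partial_return (r : S -> A -> R) (pi : hpolicy R A Y) n h : R :=
  \sum_(j < n) gamma ^+ j * exp_step rho P r pi j h.

Lemma partial_return_S r pi n h :
  partial_return r pi n.+1 h =
  \sum_a pi h a * (exp_reward rho P r h a + gamma *
     \sum_y pred_obs rho P h a y * partial_return r pi n (hist_rcons h a y)).
Proof.
rewrite /partial_return big_ord_recl expr0 mul1r /=.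
under [RHS]eq_bigr do rewrite mulrDr; rewrite big_split /=; congr (_ + _).
under eq_bigr do rewrite mulr_sumr.
rewrite exchange_big /=; apply: eq_bigr => a _.
under eq_bigr do rewrite !mulr_sumr.
rewrite exchange_big mulrA mulr_sumr /=; apply: eq_bigr => y _.
rewrite mulrA mulr_sumr; apply: eq_bigr => j _.
by rewrite /bump add1n exprS; ring.
Qed.

Lemma partial_return_le (r : S -> A -> R) (pi : hpolicy R A Y)
    (W : hist A Y -> R) (e : nat -> R) (C : R) t :
  valid_hpolicy pi -> (forall h, `|W h| <= C) ->
  (forall h, reachable rho P h -> (t <= htime h)%N ->
     \sum_a pi h a * (exp_reward rho P r h a +
        gamma * \sum_y pred_obs rho P h a y * W (hist_rcons h a y))
     <= W h + e (htime h)) ->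
  forall n h, reachable rho P h -> (t <= htime h)%N ->
  partial_return r pi n h <=
    W h + \sum_(j < n) gamma ^+ j * e (htime h + j)%N + gamma ^+ n * C.
Proof.
move=> pi_valid W_le step; elim=> [|n IHn] h hR ht.
  have := W_le h; rewrite ler_norml /partial_return !big_ord0 => /andP[? _].
  lra.
pose B := \sum_(j < n) gamma ^+ j * e ((htime h).+1 + j)%N + gamma ^+ n * C.
have -> : W h + \sum_(j < n.+1) gamma ^+ j * e (htime h + j)%N
            + gamma ^+ n.+1 * C = W h + e (htime h) + gamma * B.
  rewrite big_ord_recl expr0 mul1r addn0 /B mulrDr mulr_sumr exprS.
  under eq_bigr do rewrite lift0 exprS addnS -addSn -mulrA.
  ring.
apply: (@le_trans _ _ (\sum_a pi h a * (exp_reward rho P r h a +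
   gamma * \sum_y pred_obs rho P h a y * W (hist_rcons h a y)) + gamma * B)).
  rewrite partial_return_S -sum_dist_addr; last exact: (pi_valid h).2.
  apply: ler_sum => a _; rewrite ler_wpM2l ?(pi_valid h).1 //.
  rewrite -addrA lerD2l -mulrDr ler_wpM2l // -sum_dist_addr ?pred_obs_sum1 //.
  apply: sum_pred_obs_le => // y hyR.
  have := IHn _ hyR; rewrite /B htime_rcons addrA; apply; exact: leqW.
by rewrite lerD2r step.
Qed.

Lemma exp_reward_opp r h a :
  exp_reward rho P (fun s a => - r s a) h a = - exp_reward rho P r h a.
Proof. by rewrite /exp_reward -sumrN; apply: eq_bigr => s _; rewrite mulrN. Qed.

Lemma exp_step_opp r pi k h :
  exp_step rho P (fun s a => - r s a) pi k h = - exp_step rho P r pi k h.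
Proof.
elim: k h => [|k IHk] h /=; rewrite -sumrN; apply: eq_bigr => a _.
  by rewrite exp_reward_opp mulrN.
rewrite -mulrN -sumrN; congr (_ * _); apply: eq_bigr => y _.
by rewrite IHk mulrN.
Qed.

Lemma partial_return_opp r pi n h :
  partial_return (fun s a => - r s a) pi n h = - partial_return r pi n h.
Proof.
rewrite /partial_return -sumrN.
by apply: eq_bigr => j _; rewrite exp_step_opp mulrN.
Qed.

(* The lower bound is the upper bound for the negated reward. *)
Lemma partial_return_ge (r : S -> A -> R) (pi : hpolicy R A Y)
    (W : hist A Y -> R) (e : nat -> R) (C : R) t :
  valid_hpolicy pi -> (forall h, `|W h| <= C) ->
  (forall h, reachable rho P h -> (t <= htime h)%N ->
     W h - e (htime h) <=
     \sum_a pi h a * (exp_reward rho P r h a +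
        gamma * \sum_y pred_obs rho P h a y * W (hist_rcons h a y))) ->
  forall n h, reachable rho P h -> (t <= htime h)%N ->
  W h - \sum_(j < n) gamma ^+ j * e (htime h + j)%N - gamma ^+ n * C <=
    partial_return r pi n h.
Proof.
move=> pi_valid W_le step n h hR ht.
have NW_le h' : `|- W h'| <= C by rewrite normrN.
have Nstep h' : reachable rho P h' -> (t <= htime h')%N ->
    \sum_a pi h' a * (exp_reward rho P (fun s a => - r s a) h' a +
      gamma * \sum_y pred_obs rho P h' a y * - W (hist_rcons h' a y))
    <= - W h' + e (htime h').
  move=> h'R h't; have := step h' h'R h't.
  set X := \sum_a _; set NX := \sum_a _.
  have -> : NX = - X.
    rewrite -sumrN; apply: eq_bigr => a _.
    rewrite -mulrN opprD -mulrN -exp_reward_opp -sumrN.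
    by congr (_ * (_ + _ * _)); apply: eq_bigr => y _; rewrite mulrN.
  lra.
have := partial_return_le pi_valid NW_le Nstep n hR ht.
rewrite partial_return_opp; lra.
Qed.

Lemma exp_step_ge0 (r : S -> A -> R) (pi : hpolicy R A Y) :
  (forall s a, 0 <= r s a) -> valid_hpolicy pi ->
  forall k h, 0 <= exp_step rho P r pi k h.
Proof.
move=> r_ge0 pi_valid; elim=> [|k IHk] h /=; apply: sumr_ge0 => a _;
  rewrite mulr_ge0 ?(pi_valid h).1 //.
  by apply: sumr_ge0 => s _; rewrite mulr_ge0 ?belief_ge0.
by apply: sumr_ge0 => y _; rewrite mulr_ge0 ?pred_obs_ge0.
Qed.

Section Value.
Variables (r : S -> A -> R) (pi : hpolicy R A Y) (h : hist A Y).
Hypothesis r_ge0 : forall s a, 0 <= r s a.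
Hypothesis pi_valid : valid_hpolicy pi.

Let partial_sum_ge0 k :
  (0 <= (gamma ^+ (htime h + k) * exp_step rho P r pi k h)%:E)%E.
Proof. by rewrite lee_fin mulr_ge0 ?exprn_ge0 ?exp_step_ge0. Qed.

Lemma Vpi_partial_sum n :
  (\sum_(0 <= k < n) (gamma ^+ (htime h + k) * exp_step rho P r pi k h)%:E)%E
  = (gamma ^+ htime h * partial_return r pi n h)%:E.
Proof.
rewrite sumEFin big_mkord /partial_return mulr_sumr.
by congr (_%:E); apply: eq_bigr => k _; rewrite exprD mulrA.
Qed.

Lemma partial_return_le_add n m :
  partial_return r pi n h <= partial_return r pi (n + m) h.
Proof.
rewrite /partial_return big_split_ord /= lerDl.
by apply: sumr_ge0 => j _; rewrite mulr_ge0 ?exprn_ge0 ?exp_step_ge0.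
Qed.

Lemma Vpi_le_of_partial_return (b c : R) :
  (forall n, partial_return r pi n h <= b + gamma ^+ n * c) ->
  (Vpi rho P r gamma pi h <= (gamma ^+ htime h * b)%:E)%E.
Proof.
move=> pr_le; apply: lime_le; first by apply: is_cvg_nneseries => k _ _.
apply: nearW => n; rewrite Vpi_partial_sum lee_fin ler_wpM2l ?exprn_ge0 //.
apply: (le_of_le_add_geometric (c := gamma ^+ n * c) gamma01) => m.
rewrite mulrA -exprD addnC.
exact: le_trans (partial_return_le_add n m) (pr_le _).
Qed.

Lemma Vpi_ge_of_partial_return (b c : R) :
  (forall n, b <= partial_return r pi n h + gamma ^+ n * c) ->
  ((gamma ^+ htime h * b)%:E <= Vpi rho P r gamma pi h)%E.
Proof.
move=> pr_ge.
have Vpi_ge n : ((gamma ^+ htime h * partial_return r pi n h)%:E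
    <= Vpi rho P r gamma pi h)%E.
  by rewrite -Vpi_partial_sum; apply: nneseries_lim_ge => k _ _.
case: (Vpi _ _ _ _ _ _) Vpi_ge => [v| |] Vpi_ge; last 2 first.
- exact: leey.
- by have := Vpi_ge 0%N; rewrite leeNy_eq.
apply: (le_of_le_add_geometric (c := gamma ^+ htime h * c) gamma01) => n.
apply: le_trans (_ : _ <= gamma ^+ htime h * (partial_return r pi n h
                                             + gamma ^+ n * c)) _.
  by rewrite ler_wpM2l ?exprn_ge0.
by rewrite mulrDr mulrCA lerD2r -lee_fin.
Qed.

End Value.

End PartialReturn.

Lemma periodic_geometric_sum_le (R : realType) (g : R) (E : nat -> R) L :
  0 <= g < 1 -> (0 < L)%N -> (forall l, (l < L)%N -> 0 <= E l) ->
  forall n, \sum_(j < n) g ^+ j * E (j %% L)%N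
            <= (\sum_(l < L) g ^+ l * E l) / (1 - g ^+ L).
Proof.
move=> /andP[g0 g1] L_gt0 E_ge0 n.
have gL1 : g ^+ L < 1 by rewrite exprn_ilt1 // -lt0n.
pose T n := \sum_(j < n) g ^+ j * E (j %% L)%N.
have T_shift : T (L + n)%N = \sum_(l < L) g ^+ l * E l + g ^+ L * T n.
  rewrite /T big_split_ord /= mulr_sumr; congr (_ + _).
    by apply: eq_bigr => l _; rewrite modn_small.
  by apply: eq_bigr => j _; rewrite modnDl exprD mulrA.
have T_le : T n <= T (L + n)%N.
  rewrite /T addnC big_split_ord /= lerDl.
  by apply: sumr_ge0 => j _; rewrite mulr_ge0 ?exprn_ge0 ?E_ge0 ?ltn_pmod.
rewrite -/(T n) ler_pdivlMr ?subr_gt0 // mulrBr mulr1 mulrC.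
by move: T_le; rewrite T_shift; lra.
Qed.

Lemma lee_psum_fin (R : realType) (I : finType) (c : R) (a : I -> R)
    (x : I -> \bar R) (y : \bar R) :
  0 < c -> (forall i, 0 < a i) -> (forall i, 0 <= x i)%E ->
  ((forall i, x i \is a fin_num) -> y <= (c * \sum_i a i * fine (x i))%:E)%E ->
  (y <= c%:E * \sum_i (a i)%:E * x i)%E.
Proof.
move=> c_gt0 a_gt0 x_ge0 y_le.
have [x_fin|] := pselect (forall i, x i \is a fin_num).
  suff <- : (c * \sum_i a i * fine (x i))%:E = (c%:E * \sum_i (a i)%:E * x i)%E.
    exact: y_le.
  rewrite EFinM -sumEFin; congr (_ * _)%E.
  by apply: eq_bigr => i _; rewrite EFinM fineK.
move=> /existsNP[i /negP]; rewrite ge0_fin_numE // ltey negbK => /eqP xi_y.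
have rest_ge0 : (0 <= \sum_(j | j != i) (a j)%:E * x j)%E.
  by apply: sume_ge0 => j _; rewrite mule_ge0 // lee_fin ltW.
rewrite (bigD1 i) //= xi_y gt0_muley ?lte_fin //.
rewrite addye ?gt0_muley ?lte_fin ?leey //.
by rewrite gt_eqF // (lt_le_trans _ rest_ge0) ?ltNy0.
Qed.

Section IntegralProbabilityMetric.
Variables (R : realType) (Z : finType) (F : set (Z -> R)).

Lemma minkowski_F_ge0 f : (0 <= minkowski_F F f)%E.
Proof.
by apply: le_ereal_inf_tmp => _ [c [c_gt0 _] <-]; rewrite lee_fin ltW.
Qed.

Lemma minkowski_F_nonempty f :
  minkowski_F F f != +oo%E -> exists2 c, 0 < c & F (fun z => f z / c).
Proof.
have [//|noc] := pselect (exists2 c, 0 < c & F (fun z => f z / c)).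
rewrite /minkowski_F.
suff -> : [set c%:E | c in [set c : R | 0 < c /\ F (fun z => f z / c)]] = set0.
  by rewrite ereal_inf0 eqxx.
by apply/seteqP; split => // x [c [c_gt0 Fc] _]; apply: noc; exists c.
Qed.

Lemma ipm_F_ge0 g (xi1 xi2 : Z -> R) : F g -> (0 <= ipm_F F xi1 xi2)%E.
Proof.
move=> Fg; apply: le_ereal_sup_tmp.
by exists (`|\sum_z g z * xi1 z - \sum_z g z * xi2 z|)%:E; [exists g|].
Qed.

Lemma mul_inf_minkowski_ge0 (d : \bar R) f :
  ((exists g, F g) -> (0 <= d)%E) -> (0 <= mul_inf d (minkowski_F F f))%E.
Proof.
move=> d_ge0; rewrite /mul_inf; case: ifPn => // /norP[_ M_fin].
have [c _ Fc] := minkowski_F_nonempty M_fin.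
by rewrite mule_ge0 ?minkowski_F_ge0 ?d_ge0 //; exists (fun z => f z / c).
Qed.

Lemma ipm_F_scale_le (xi1 xi2 f : Z -> R) (c : R) :
  0 < c -> F (fun z => f z / c) ->
  ((`|\sum_z f z * xi1 z - \sum_z f z * xi2 z|)%:E
     <= c%:E * ipm_F F xi1 xi2)%E.
Proof.
set D := `|_ - _|; move=> c_gt0 Fc.
have Dc_le : ((D / c)%:E <= ipm_F F xi1 xi2)%E.
  apply: ereal_sup_ubound; exists (fun z => f z / c) => //.
  rewrite /D -[c in RHS]gtr0_norm // -normf_div mulrBl !mulr_suml.
  by congr (`|_ - _|%:E); apply: eq_bigr => z _; rewrite mulrAC.
rewrite -(divfK (lt0r_neq0 c_gt0) D) mulrC EFinM lee_wpmul2l //.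
by rewrite lee_fin ltW.
Qed.

Lemma ipm_minkowski_le (xi1 xi2 f : Z -> R) (d : \bar R) :
  (ipm_F F xi1 xi2 <= d)%E ->
  ((`|\sum_z f z * xi1 z - \sum_z f z * xi2 z|)%:E
     <= mul_inf d (minkowski_F F f))%E.
Proof.
set D := `|_ - _|; move=> ipm_le.
rewrite /mul_inf; case: ifPn => [_|/norP[d_fin M_fin]]; first exact: leey.
have D_le (c : R) : 0 < c -> F (fun z => f z / c) -> (D%:E <= c%:E * d)%E.
  move=> c_gt0 Fc; apply: le_trans (ipm_F_scale_le _ _ c_gt0 Fc) _.
  by rewrite lee_wpmul2l // lee_fin ltW.
have [c c_gt0 Fc] := minkowski_F_nonempty M_fin.
case: d d_fin ipm_le D_le => [d _ _ D_le| //|_ _ D_le]; last first.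
  by have := D_le c c_gt0 Fc; rewrite mulrNy gtr0_sg // mul1e leeNy_eq.
have [d0|d_neq0] := eqVneq d 0.
  by have := D_le c c_gt0 Fc; rewrite d0 -EFinM mulr0 mul0e.
have d_ge0 : 0 <= d.
  have := D_le c c_gt0 Fc; rewrite -EFinM lee_fin => /(le_trans (normr_ge0 _)).
  by rewrite pmulr_rge0.
rewrite -(divfK d_neq0 D) mulrC EFinM lee_wpmul2l ?lee_fin //.
apply: le_ereal_inf_tmp => _ [c' [c'_gt0 Fc'] <-].
rewrite lee_fin ler_pdivrMr ?lt_neqAle 1?eq_sym ?d_neq0 // -lee_fin EFinM.
exact: D_le.
Qed.

End IntegralProbabilityMetric.

Lemma zeta_cond_za_z (R : realType) (S A Y Z : finType)
    (zeta : S -> Y -> Z -> A -> R) (m : Z -> A -> R) z a :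
  (forall s y, zeta s y z a = m z a * \sum_a' zeta s y z a') ->
  0 < \sum_s \sum_y zeta s y z a ->
  forall s, zeta_cond_za zeta s z a = zeta_cond_z zeta s z.
Proof.
move=> zeta_m zeta_pos s.
have sza_m s0 : zeta_sza zeta s0 z a = m z a * zeta_sz zeta s0 z.
  by rewrite /zeta_sza /zeta_sz mulr_sumr; apply: eq_bigr => y _; exact: zeta_m.
have sum_m : \sum_s0 zeta_sza zeta s0 z a = m z a * \sum_s0 zeta_sz zeta s0 z.
  by rewrite mulr_sumr; apply: eq_bigr => s0 _; exact: sza_m.
have : 0 < \sum_s0 zeta_sza zeta s0 z a := zeta_pos.
rewrite sum_m => /lt0r_neq0; rewrite mulf_eq0 negb_or => /andP[m_neq0 sz_neq0].
by rewrite /zeta_cond_za /zeta_cond_z sza_m sum_m invfM mulrACA mulfV // mul1r.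
Qed.

Section CyclicLimit.
Variables (R : realType) (S A Y Z : finType).
Variables (rho : S -> Y -> R) (P : S -> Y -> S -> A -> R).
Variables (phi : Z -> Y -> A -> Z) (z0 : Z) (a0 : A) (L : nat).
Variables (mu : nat -> Z -> A -> R) (zeta : nat -> S -> Y -> Z -> A -> R).
Hypothesis L_gt0 : (0 < L)%N.
Hypothesis mu_sum1 : forall l, (l < L)%N -> forall z, \sum_a mu l z a = 1.

Lemma chain_law_factor n s y z a :
  chain_law rho P phi z0 a0 L mu n s y z a =
  mu (n.+1 %% L)%N z a * \sum_a' chain_law rho P phi z0 a0 L mu n s y z a'.
Proof.
case: n => [|n].
  by rewrite /= -mulr_sumr mu_sum1 ?ltn_pmod // mulr1 mulrC.
pose G := \sum_s0 \sum_y0 \sum_z1 \sum_a1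
  chain_law rho P phi z0 a0 L mu n s0 y0 z1 a1 * P s y s0 a1
  * (z == phi z1 y a1)%:R.
have chain_S a' : chain_law rho P phi z0 a0 L mu n.+1 s y z a' =
                  G * mu (n.+2 %% L)%N z a'.
  rewrite /G /= mulr_suml; apply: eq_bigr => s0 _; rewrite mulr_suml.
  apply: eq_bigr => y0 _; rewrite mulr_suml; apply: eq_bigr => z1 _.
  by rewrite mulr_suml.
under eq_bigr do rewrite chain_S.
by rewrite chain_S -mulr_sumr mu_sum1 ?ltn_pmod // mulr1 mulrC.
Qed.

Hypothesis zeta_lim : forall l, (l < L)%N -> forall s y z a,
  (fun k => chain_law rho P phi z0 a0 L mu (l + k.+1 * L).-1 s y z a) @ \oo
    --> zeta l s y z a.

Lemma zeta_factor l : (l < L)%N -> forall s y z a,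
  zeta l s y z a = mu l z a * \sum_a' zeta l s y z a'.
Proof.
move=> lL s y z a; pose law k := chain_law rho P phi z0 a0 L mu (l + k.+1 * L).-1.
have lim_factor : (fun k => law k s y z a) @ \oo
    --> mu l z a * \sum_a' zeta l s y z a'.
  have -> : (fun k => law k s y z a) = fun k => mu l z a * \sum_a' law k s y z a'.
    apply/funext => k; rewrite /law chain_law_factor.
    rewrite prednK ?addn_gt0 ?muln_gt0 ?L_gt0 ?orbT //.
    by rewrite addnC modnMDl modn_small.
  apply: cvgMr; apply: cvg_big => //; first exact: add_continuous.
  by move=> a' _; exact: zeta_lim.
have lim_zeta := @zeta_lim l lL s y z a.
rewrite -(cvg_lim (@Rhausdorff R) lim_zeta).
exact: (cvg_lim (@Rhausdorff R) lim_factor).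
Qed.

Lemma r_mu_cond_za (r : S -> A -> R) l z a : (l < L)%N ->
  0 < \sum_s \sum_y zeta l s y z a ->
  r_mu r (zeta l) z a = \sum_s r s a * zeta_cond_za (zeta l) s z a.
Proof.
move=> lL zeta_pos; apply: eq_bigr => s _; congr (_ * _).
by apply/esym/(zeta_cond_za_z (m := mu l)) => // s' y; exact: zeta_factor.
Qed.

End CyclicLimit.



Lemma pi_vec_valid (R : realType) (A Y Z : finType) (phi : Z -> Y -> A -> Z)
    z0 a0 L (pimu : nat -> Z -> A) :
  valid_hpolicy (pi_vec R phi z0 a0 L pimu).
Proof.
move=> h; split=> [a|]; first by rewrite ler0n.
have := sum_indicator (pimu (htime h %% L)%N (agent_state phi z0 a0 h))
  (fun=> 1 : R).
by under eq_bigr do rewrite mulr1.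
Qed.

Section ApproximateBellman.
Variables (R : realType) (S A Y Z : finType).
Variables (rho : S -> Y -> R) (P : S -> Y -> S -> A -> R) (r : S -> A -> R).
Variables (gamma : R) (phi : Z -> Y -> A -> Z) (z0 : Z) (a0 : A) (L : nat).
Variables (Q : nat -> Z -> A -> R) (pimu : nat -> Z -> A).
Hypothesis rho_ge0 : forall s y, 0 <= rho s y.
Hypothesis P_ge0 : forall s' y s a, 0 <= P s' y s a.
Hypothesis P_sum1 : forall s a, \sum_y \sum_s' P s' y s a = 1.
Hypothesis r_ge0 : forall s a, 0 <= r s a.
Hypothesis gamma01 : 0 <= gamma < 1.
Hypothesis L_gt0 : (0 < L)%N.
Hypothesis pimu_max : forall l, (l < L)%N -> forall z,
  Q l z (pimu l z) = max_act (Q l z).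

Definition value_mu (tau : nat) (z : Z) : R := max_act (Q (tau %% L)%N z).

Local Notation sigma := (agent_state phi z0 a0).
Local Notation W h := (value_mu (htime h) (sigma h)).

Definition bellman_residual (h : hist A Y) (a : A) : R :=
  exp_reward rho P r h a
  + gamma * \sum_y pred_obs rho P h a y
            * value_mu (htime h).+1 (phi (sigma h) y a)
  - Q (htime h %% L)%N (sigma h) a.

Lemma value_mu_bounded : exists C, forall h : hist A Y, `|W h| <= C.
Proof.
have [C QC] := finite_bound (fun lz : 'I_L * Z => max_act (Q lz.1 lz.2)).
by exists C => h; exact: (QC (Ordinal (ltn_pmod (htime h) L_gt0), sigma h)).
Qed.

Variables (t : nat) (e : nat -> R).
Hypothesis residual_le : forall h a, reachable rho P h -> (t <= htime h)%N ->
  `|bellman_residual h a| <= e (htime h).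

Let step_value h a :
  exp_reward rho P r h a
  + gamma * \sum_y pred_obs rho P h a y * W (hist_rcons h a y)
  = bellman_residual h a + Q (htime h %% L)%N (sigma h) a.
Proof.
rewrite /bellman_residual subrK; congr (_ + _ * _); apply: eq_bigr => y _.
by rewrite htime_rcons agent_state_rcons.
Qed.

Lemma policy_step_le pi : valid_hpolicy pi ->
  forall h, reachable rho P h -> (t <= htime h)%N ->
  \sum_a pi h a * (exp_reward rho P r h a
     + gamma * \sum_y pred_obs rho P h a y * W (hist_rcons h a y))
  <= W h + e (htime h).
Proof.
move=> pi_valid h hR ht; have [pi_ge0 pi_sum1] := pi_valid h.
rewrite -[X in _ <= X]mul1r -pi_sum1 mulr_suml; apply: ler_sum => a _.
rewrite ler_wpM2l // step_value addrC.
apply: lerD; first exact: le_max_act.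
by apply: le_trans (residual_le a hR ht); exact: ler_norm.
Qed.

Lemma greedy_step_ge h : reachable rho P h -> (t <= htime h)%N ->
  W h - e (htime h) <=
  \sum_a pi_vec R phi z0 a0 L pimu h a * (exp_reward rho P r h a
     + gamma * \sum_y pred_obs rho P h a y * W (hist_rcons h a y)).
Proof.
move=> hR ht; rewrite sum_indicator step_value pimu_max ?ltn_pmod //.
have := residual_le (pimu (htime h %% L)%N (sigma h)) hR ht.
by rewrite ler_norml /value_mu => /andP[res_ge _]; lra.
Qed.

Variable G : R.
Hypothesis err_sum_le : forall n, \sum_(j < n) gamma ^+ j * e (t + j)%N <= G.

Lemma Vpi_le_value_mu pi h : valid_hpolicy pi ->
  reachable rho P h -> htime h = t ->
  (Vpi rho P r gamma pi h <= (gamma ^+ t * (W h + G))%:E)%E.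
Proof.
move=> pi_valid hR ht; have [C W_le] := value_mu_bounded.
rewrite -ht.
apply: (Vpi_le_of_partial_return (c := C) rho_ge0 P_ge0 gamma01 r_ge0 pi_valid).
move=> n.
apply: le_trans (partial_return_le rho_ge0 P_ge0 P_sum1 gamma01 pi_valid W_le
  (policy_step_le pi_valid) n hR _) _; first by rewrite ht.
by rewrite lerD2r lerD2l ht.
Qed.

Lemma Vpi_greedy_ge h : reachable rho P h -> htime h = t ->
  ((gamma ^+ t * (W h - G))%:E
     <= Vpi rho P r gamma (pi_vec R phi z0 a0 L pimu) h)%E.
Proof.
move=> hR ht; have [C W_le] := value_mu_bounded.
have pi_valid := pi_vec_valid R phi z0 a0 L pimu.
rewrite -ht.
apply: (Vpi_ge_of_partial_return (c := C) rho_ge0 P_ge0 gamma01 r_ge0 pi_valid).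
move=> n.
have := partial_return_ge rho_ge0 P_ge0 P_sum1 gamma01 pi_valid W_le
  greedy_step_ge n hR.
rewrite ht leqnn => /(_ isT); have := err_sum_le n; lra.
Qed.

Lemma value_gap_le h : reachable rho P h -> htime h = t ->
  (Vstar rho P r gamma h - Vpi rho P r gamma (pi_vec R phi z0 a0 L pimu) h
     <= (2 * G)%:E)%E.
Proof.
move=> hR ht; have G_ge0 : 0 <= G by have := err_sum_le 0; rewrite big_ord0.
have Vstar_le : (Vstar rho P r gamma h <= (gamma ^+ t * (W h + G))%:E)%E.
  by apply: ge_ereal_sup => _ [pi pi_valid <-]; exact: Vpi_le_value_mu.
apply: le_trans (leeB Vstar_le (Vpi_greedy_ge hR ht)) _.
rewrite -EFinB lee_fin.
have /andP[g_ge0 g_lt1] := gamma01.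
have gt_le1 : gamma ^+ t <= 1 by rewrite exprn_ile1 // ltW.
have gt_ge0 : 0 <= gamma ^+ t by rewrite exprn_ge0.
nra.
Qed.

End ApproximateBellman.

Lemma sum_next_agent_state_law (R : realType) (S A Y Z : finType)
    (rho : S -> Y -> R) (P : S -> Y -> S -> A -> R) (phi : Z -> Y -> A -> Z)
    z0 a0 (h : hist A Y) (a : A) (f : Z -> R) :
  \sum_z f z * next_agent_state_law rho P phi z0 a0 h a z =
  \sum_y pred_obs rho P h a y * f (phi (agent_state phi z0 a0 h) y a).
Proof.
rewrite /next_agent_state_law; under eq_bigr do rewrite mulr_sumr.
rewrite exchange_big /=; apply: eq_bigr => y _.
under eq_bigr do rewrite mulrCA; rewrite -mulr_sumr; congr (_ * _).
by under eq_bigr do rewrite mulrC; exact: sum_indicator.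
Qed.

Lemma Vpi_gamma0 (R : realType) (S A Y : finType) (rho : S -> Y -> R)
    (P : S -> Y -> S -> A -> R) (r : S -> A -> R) (pi : hpolicy R A Y) h :
  Vpi rho P r 0 pi h = 0%E.
Proof. by rewrite /Vpi eseries0 // => k _ _; rewrite expr0n addSn mul0r. Qed.

Section ErrorTerms.
Variables (R : realType) (S A Y Z : finType).
Variables (rho : S -> Y -> R) (P : S -> Y -> S -> A -> R) (r : S -> A -> R).
Variables (gamma : R) (phi : Z -> Y -> A -> Z) (z0 : Z) (a0 : A) (L : nat).
Variables (zeta : nat -> S -> Y -> Z -> A -> R) (Q : nat -> Z -> A -> R).
Variables (pimu : nat -> Z -> A) (F : set (Z -> R)).
Hypothesis rho_ge0 : forall s y, 0 <= rho s y.
Hypothesis P_ge0 : forall s' y s a, 0 <= P s' y s a.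
Hypothesis P_sum1 : forall s a, \sum_y \sum_s' P s' y s a = 1.
Hypothesis r_ge0 : forall s a, 0 <= r s a.
Hypothesis gamma01 : 0 <= gamma < 1.
Hypothesis L_gt0 : (0 < L)%N.
Hypothesis r_mu_cond : forall l, (l < L)%N -> forall z a,
  r_mu r (zeta l) z a = \sum_s r s a * zeta_cond_za (zeta l) s z a.
Hypothesis Q_bellman : forall l, (l < L)%N -> forall z a,
  Q l z a = r_mu r (zeta l) z a +
    gamma * \sum_z' P_mu P phi (zeta l) z' z a
              * max_act (Q ((l + 1) %% L)%N z').
Hypothesis pimu_max : forall l, (l < L)%N -> forall z,
  Q l z (pimu l z) = max_act (Q l z).

Local Notation sigma := (agent_state phi z0 a0).
Local Notation eps_err := (eps_err rho P r phi z0 a0 L zeta).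
Local Notation delta_err := (delta_err rho P phi z0 a0 L zeta F).

Lemma bellman_residual_le_err h a t : reachable rho P h ->
  (t <= htime h)%N -> (htime h %% L = t %% L)%N ->
  ((`|bellman_residual rho P r gamma phi z0 a0 L Q h a|)%:E <=
   eps_err (t %% L) t + gamma%:E *
     mul_inf (delta_err (t %% L) t) (minkowski_F F (value_mu L Q (t + 1))))%E.
Proof.
move=> hR ht h_mod; have lL : (t %% L < L)%N := ltn_pmod t L_gt0.
have next_mod : ((htime h).+1 %% L = (t + 1) %% L)%N.
  by rewrite -addn1 -modnDml h_mod modnDml.
have eps_le : ((`|exp_reward rho P r h a - r_mu r (zeta (t %% L)) (sigma h) a|)%:E
                <= eps_err (t %% L) t)%E.
  by apply: ereal_sup_ubound; exists h, a; split; rewrite // r_mu_cond.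
have delta_le : (ipm_F F (next_agent_state_law rho P phi z0 a0 h a)
    (fun z' => P_mu P phi (zeta (t %% L)) z' (sigma h) a)
    <= delta_err (t %% L) t)%E.
  by apply: ereal_sup_ubound; exists h, a.
have := ipm_minkowski_le (value_mu L Q (t + 1)) delta_le.
rewrite sum_next_agent_state_law /bellman_residual h_mod Q_bellman //.
have -> : value_mu L Q (htime h).+1 = value_mu L Q (t + 1).
  by apply/funext => z; rewrite /value_mu next_mod.
set B := \sum_y _; set B' := \sum_z _ * _; set B'' := \sum_z' _ * _.
have -> : B'' = B' by apply: eq_bigr => z _; rewrite /value_mu modnDml mulrC.
move=> ipm_le; set x := exp_reward _ _ _ _ _; set x' := r_mu _ _ _ _.
have g_ge0 : 0 <= gamma by case/andP: gamma01.
apply: le_trans (leeD eps_le (lee_wpmul2l _ ipm_le)); last by rewrite lee_fin.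
rewrite -EFinM -EFinD lee_fin.
rewrite (_ : _ - _ = x - x' + gamma * (B - B')); last by ring.
by rewrite (le_trans (ler_normD _ _)) // normrM ger0_norm.
Qed.

Definition err_term (t l : nat) : \bar R :=
  eps_err ((t + l) %% L) (t + l) + gamma%:E *
    mul_inf (delta_err ((t + l) %% L) (t + l))
            (minkowski_F F (value_mu L Q (t + l + 1))).

Lemma err_term_ge0 t l : (exists h, reachable rho P h /\ htime h = (t + l)%N) ->
  (0 <= err_term t l)%E.
Proof.
move=> [h [hR ht]]; have g_ge0 : 0 <= gamma by case/andP: gamma01.
have h_err : [/\ (t + l <= htime h)%N, (htime h %% L = (t + l) %% L)%N
  & reachable rho P h] by rewrite ht.
apply: adde_ge0; last apply: mule_ge0; rewrite ?lee_fin //.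
  apply: le_ereal_sup_tmp; exists (`|exp_reward rho P r h a0 -
    \sum_s r s a0 * zeta_cond_za (zeta ((t + l) %% L)) s (sigma h) a0|)%:E => //.
  by exists h, a0; case: h_err.
apply: mul_inf_minkowski_ge0 => -[g Fg]; apply: le_ereal_sup_tmp.
exists (ipm_F F (next_agent_state_law rho P phi z0 a0 h a0)
   (fun z' => P_mu P phi (zeta ((t + l) %% L)) z' (sigma h) a0)).
  by exists h, a0; case: h_err.
exact: ipm_F_ge0 Fg.
Qed.

Lemma bellman_residual_le_err_term t h a :
  reachable rho P h -> (t <= htime h)%N ->
  ((`|bellman_residual rho P r gamma phi z0 a0 L Q h a|)%:E
     <= err_term t ((htime h - t) %% L))%E.
Proof.
move=> hR ht; have tl_le : (t + (htime h - t) %% L <= htime h)%N.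
  by rewrite -[leqRHS](subnKC ht) leq_add2l leq_mod.
apply: bellman_residual_le_err => //.
by rewrite modnDmr subnKC.
Qed.

Lemma value_gap_le_err_terms t h : reachable rho P h -> htime h = t ->
  (forall l : 'I_L, err_term t l \is a fin_num) ->
  (Vstar rho P r gamma h - Vpi rho P r gamma (pi_vec R phi z0 a0 L pimu) h <=
   (2 / (1 - gamma ^+ L) * \sum_(l < L) gamma ^+ l * fine (err_term t l))%:E)%E.
Proof.
move=> hR ht err_fin.
pose E l := fine (err_term t l); pose e tau := E ((tau - t) %% L)%N.
have E_ge0 l : 0 <= E l.
  by apply/fine_ge0/err_term_ge0; rewrite -ht; exact: reachable_extend.
have residual_le h' a : reachable rho P h' -> (t <= htime h')%N ->
    `|bellman_residual rho P r gamma phi z0 a0 L Q h' a| <= e (htime h').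
  move=> h'R h't; rewrite -lee_fin /e /E fineK.
    exact: bellman_residual_le_err_term.
  exact: (err_fin (Ordinal (ltn_pmod _ L_gt0))).
have err_sum_le n : \sum_(j < n) gamma ^+ j * e (t + j)%N
    <= (\sum_(l < L) gamma ^+ l * E l) / (1 - gamma ^+ L).
  under eq_bigr do rewrite /e addKn.
  by apply: periodic_geometric_sum_le => // l _.
rewrite mulrAC -mulrA.
exact: (value_gap_le rho_ge0 P_ge0 P_sum1 r_ge0 gamma01 L_gt0 pimu_max
  residual_le err_sum_le hR ht).
Qed.

Lemma value_gap_le_err_bound t h : reachable rho P h -> htime h = t ->
  (Vstar rho P r gamma h - Vpi rho P r gamma (pi_vec R phi z0 a0 L pimu) h <=
   (2 / (1 - gamma ^+ L))%:E * \sum_(l < L) (gamma ^+ l)%:E * err_term t l)%E.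
Proof.
move=> hR ht; have /andP[g_ge0 g_lt1] := gamma01.
have err_ge0 l : (0 <= err_term t l)%E.
  by apply: err_term_ge0; rewrite -ht; exact: reachable_extend.
have [gamma0|gamma_neq0] := eqVneq gamma 0.
  apply: (@le_trans _ _ 0%E).
    rewrite gamma0 Vpi_gamma0 sube0; apply: ge_ereal_sup => _ [pi _ <-].
    by rewrite Vpi_gamma0.
  apply: mule_ge0.
    by rewrite lee_fin divr_ge0 // subr_ge0 exprn_ile1 // ltW.
  by apply: sume_ge0 => l _; rewrite mule_ge0 // lee_fin exprn_ge0.
have gamma_gt0 : 0 < gamma by rewrite lt_neqAle eq_sym gamma_neq0.
apply: lee_psum_fin => // [|l|err_fin]; last exact: value_gap_le_err_terms.
  by rewrite divr_gt0 // subr_gt0 exprn_ilt1 // -lt0n.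
exact: exprn_gt0.
Qed.

End ErrorTerms.



Unset Implicit Arguments.
Set Strict Implicit.

Theorem theorem2 (R : realType) (S A Y Z : finType)
  (rho : S -> Y -> R) (P : S -> Y -> S -> A -> R) (r : S -> A -> R)
  (Rmax gamma : R) (phi : Z -> Y -> A -> Z) (z0 : Z) (a0 : A) (L : nat)
  (mu : nat -> Z -> A -> R) (zeta : nat -> S -> Y -> Z -> A -> R)
  (Q : nat -> Z -> A -> R) (pimu : nat -> Z -> A) (F : set (Z -> R))
  (hrho : is_dist (fun sy : S * Y => rho sy.1 sy.2))
  (hP : forall s a, is_dist (fun sy : S * Y => P sy.1 sy.2 s a))
  (hr : forall s a, 0 <= r s a <= Rmax)
  (hgamma : 0 <= gamma < 1)
  (hL : (0 < L)%N)
  (hmu : forall l, (l < L)%N -> forall z, is_dist (mu l z))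
  (hconv : forall l, (l < L)%N -> forall s y z a,
     (fun k => chain_law rho P phi z0 a0 L mu (l + k.+1 * L).-1 s y z a) @ \oo
       --> zeta l s y z a)
  (hpos : forall l, (l < L)%N -> forall z a,
     0 < \sum_(s : S) \sum_(y : Y) zeta l s y z a)
  (hQ : forall l, (l < L)%N -> forall z a,
     Q l z a = r_mu r (zeta l) z a +
       gamma * \sum_(z' : Z) P_mu P phi (zeta l) z' z a * max_act (Q ((l + 1) %% L)%N z'))
  (hpi : forall l, (l < L)%N -> forall z, Q l z (pimu l z) = max_act (Q l z))
  (hFc : convex_fset F) (hFb : balanced_fset F) :
  forall t : nat, (0 < t)%N ->
  (ereal_sup [set (Vstar rho P r gamma h
                   - Vpi rho P r gamma (pi_vec R phi z0 a0 L pimu) h)%E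
              | h in [set h : hist A Y | htime h = t /\ reachable rho P h]]
   <= (2 / (1 - gamma ^+ L))%:E *
      \sum_(l < L)
        ((gamma ^+ l)%:E *
         (eps_err rho P r phi z0 a0 L zeta ((t + l) %% L) (t + l) +
          gamma%:E *
          mul_inf (delta_err rho P phi z0 a0 L zeta F ((t + l) %% L) (t + l))
                  (minkowski_F F (fun z => max_act (Q ((t + l + 1) %% L)%N z))))))%E.
Proof.
move=> t _.
have rho_ge0 s y : 0 <= rho s y := hrho.1 (s, y).
have P_ge0 s' y s a : 0 <= P s' y s a := (hP s a).1 (s', y).
have P_sum1 s a : \sum_y \sum_s' P s' y s a = 1.
  by rewrite exchange_big pair_big; exact: (hP s a).2.
have r_ge0 s a : 0 <= r s a by case/andP: (hr s a).
have mu_sum1 l lL z : \sum_a mu l z a = 1 := (hmu l lL z).2.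
have r_mu_cond l (lL : (l < L)%N) z a :=
  r_mu_cond_za hL mu_sum1 hconv r lL (hpos l lL z a).
apply: ge_ereal_sup => _ [h [ht hR] <-].
exact: (value_gap_le_err_bound z0 a0 F rho_ge0 P_ge0 P_sum1 r_ge0 hgamma hL
  r_mu_cond hQ hpi hR ht).
Qed.
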